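(* (Completeness) Every valid sequent of $\text{HXPath}_{\rm D}$ is provable in the sequent calculus $\mathbf{G}$.
   Context: Syntax of $\text{HXPath}_{\rm D}$: fix pairwise disjoint sets $\mathsf{Prop}$ (propositions, countably infinite), $\mathsf{Nom}$ (nominals, countably infinite), $\mathsf{Mod}$ (modalities, finite), $\mathsf{Cmp}$ (comparisons, finite). Path expressions $\alpha,\beta ::= \mathsf{a} \mid i{:} \mid \varphi? \mid \alpha\beta$ and node expressions $\varphi,\psi ::= p \mid i \mid \bot \mid \varphi\to\psi \mid @_i\varphi \mid \langle \mathsf{a}\rangle\varphi \mid \langle\alpha =_{\mathsf{c}} \beta\rangle \mid \langle \alpha\neq_{\mathsf{c}}\beta\rangle$, with $p\in\mathsf{Prop}$, $i\in\mathsf{Nom}$, $\mathsf{a}\in\mathsf{Mod}$, $\mathsf{c}\in\mathsf{Cmp}$. Abbreviations: $\top:=\bot\to\bot$, $\neg\varphi:=\varphi\to\bot$, $\varphi\lor\psi := \neg\varphi\to\psi$, $\varphi\land\psi:=\neg(\varphi\to\neg\psi)$; $\epsilon:=\top?$; $\langle j{:}\rangle\varphi := @_j\varphi$, $\langle\psi?\rangle\varphi:=\psi\land\varphi$, $\langle\alpha\beta\rangle\varphi:=\langle\alpha\rangle\langle\beta\rangle\varphi$. The symbol $\blacktriangle$ stands for either $=_{\mathsf{c}}$ or $\neq_{\mathsf{c}}$ (for some $\mathsf{c}$). Models: $\mathcal{M}=\langle N,\{R_{\mathsf a}\}_{\mathsf a\in\mathsf{Mod}},\{\approx_{\mathsf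 c}\}_{\mathsf c\in\mathsf{Cmp}},g,V\rangle$ with $N\neq\emptyset$, each $R_{\mathsf a}\subseteq N\times N$, each $\approx_{\mathsf c}$ an equivalence relation on $N$, $g:\mathsf{Nom}\to N$, $V:\mathsf{Prop}\to 2^N$. Semantics: $\mathcal M,n,n'\Vdash \mathsf a$ iff $nR_{\mathsf a}n'$; $\mathcal M,n,n'\Vdash i{:}$ iff $g(i)=n'$; $\mathcal M,n,n'\Vdash\varphi?$ iff $n=n'$ and $\mathcal M,n\Vdash\varphi$; $\mathcal M,n,n'\Vdash\alpha\beta$ iff there is $n''$ with $\mathcal M,n,n''\Vdash\alpha$ and $\mathcal M,n'',n'\Vdash\beta$; $\mathcal M,n\Vdash p$ iff $n\in V(p)$; $\mathcal M,n\Vdash i$ iff $g(i)=n$; $\bot$ never holds; $\to$ classical; $\mathcal M,n\Vdash @_i\varphi$ iff $\mathcal M,g(i)\Vdash\varphi$; $\mathcal M,n\Vdash\langle\mathsf a\rangle\varphi$ iff some $n'$ has $nR_{\mathsf a}n'$ and $\mathcal M,n'\Vdash\varphi$; $\mathcal M,n\Vdash\langle\alpha=_{\mathsf c}\beta\rangle$ (resp. $\langle\alpha\neq_{\mathsf c}\beta\rangle$) iff there are $n',n''$ with $\mathcal M,n,n'\Vdash\alpha$, $\mathcal M,n,n''\Vdash\beta$ and $n'\approx_{\mathsf c}n''$ (resp. $n'\not\approx_{\mathsf c}n''$). Sequents: a sequent $\Gamma\vdash\Delta$ consists of finite (possibly empty) sets $\Gamma,\Delta$ of node expressions each of the form $\langle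 i{:}\blacktriangle j{:}\rangle$ or $@_i\varphi$. It is valid iff for every model $\mathcal M$ and node $n$, if $\mathcal M,n\Vdash\gamma$ for all $\gamma\in\Gamma$ then $\mathcal M,n\Vdash\delta$ for some $\delta\in\Delta$. Notation ''$\varphi,\Gamma$'' means $\{\varphi\}\cup\Gamma$. The calculus $\mathbf{G}$ (each rule written premisses $\Rightarrow$ conclusion): (Ax) axiom $\varphi,\Gamma\vdash\Delta,\varphi$ where $\varphi$ is of the form $@_ip$, $@_ij$ or $\langle i{:}=_{\mathsf c}j{:}\rangle$; ($\bot$) axiom $@_i\bot,\Gamma\vdash\Delta$; ($\to$L) $\Gamma\vdash\Delta,@_i\varphi$ and $@_i\psi,\Gamma\vdash\Delta$ $\Rightarrow$ $@_i(\varphi\to\psi),\Gamma\vdash\Delta$; ($\to$R) $@_i\varphi,\Gamma\vdash\Delta,@_i\psi\Rightarrow\Gamma\vdash\Delta,@_i(\varphi\to\psi)$; ($@$T) $@_ii,\Gamma\vdash\Delta\Rightarrow\Gamma\vdash\Delta$; ($@5$) $@_jk,@_ij,@_ik,\Gamma\vdash\Delta\Rightarrow @_ij,@_ik,\Gamma\vdash\Delta$; (Nom) $@_ij,\Gamma\vdash\Delta\Rightarrow\Gamma\vdash\Delta$, $j$ not in the conclusion; (S$_1$) $@_j\varphi,@_ij,@_i\varphi,\Gamma\vdash\Delta\Rightarrow @_ij,@_i\varphi,\Gamma\vdash\Delta$, $\varphi$ of the form $p$, $\bot$ or $\langle\mathsf a\rangle k$; (S$_2$) $@_i\langle\mathsf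 a\rangle k,@_jk,@_i\langle\mathsf a\rangle j,\Gamma\vdash\Delta\Rightarrow @_jk,@_i\langle\mathsf a\rangle j,\Gamma\vdash\Delta$; (S$_3$) $\langle j{:}=_{\mathsf c}k{:}\rangle,@_ij,\langle i{:}=_{\mathsf c}k{:}\rangle,\Gamma\vdash\Delta\Rightarrow @_ij,\langle i{:}=_{\mathsf c}k{:}\rangle,\Gamma\vdash\Delta$; ($@$L) $@_i\varphi,\Gamma\vdash\Delta\Rightarrow @_j@_i\varphi,\Gamma\vdash\Delta$; ($@$R) $\Gamma\vdash\Delta,@_i\varphi\Rightarrow\Gamma\vdash\Delta,@_j@_i\varphi$; ($\langle\mathsf a\rangle$L) $@_i\langle\mathsf a\rangle j,@_j\varphi,\Gamma\vdash\Delta\Rightarrow @_i\langle\mathsf a\rangle\varphi,\Gamma\vdash\Delta$, $j$ not in the conclusion; ($\langle\mathsf a\rangle$R) $@_i\langle\mathsf a\rangle j,\Gamma\vdash\Delta,@_i\langle\mathsf a\rangle\varphi,@_j\varphi\Rightarrow @_i\langle\mathsf a\rangle j,\Gamma\vdash\Delta,@_i\langle\mathsf a\rangle\varphi$; ($\langle\blacktriangle\rangle$L) $@_i\langle\alpha\rangle j,@_i\langle\beta\rangle k,\langle j{:}\blacktriangle k{:}\rangle,\Gamma\vdash\Delta\Rightarrow @_i\langle\alpha\blacktriangle\beta\rangle,\Gamma\vdash\Delta$, $j,k$ distinct and not in the conclusion; ($\langle\blacktriangle\rangle$R) $@_i\langle\alpha\rangle j,@_i\langle\beta\rangle k,\Gamma\vdash\Delta,@_i\langle\alpha\blacktriangle\beta\rangle,\langle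 j{:}\blacktriangle k{:}\rangle\Rightarrow @_i\langle\alpha\rangle j,@_i\langle\beta\rangle k,\Gamma\vdash\Delta,@_i\langle\alpha\blacktriangle\beta\rangle$; (EqT) $\langle i{:}=_{\mathsf c}i{:}\rangle,\Gamma\vdash\Delta\Rightarrow\Gamma\vdash\Delta$; (Eq5) $\langle j{:}=_{\mathsf c}k{:}\rangle,\langle i{:}=_{\mathsf c}j{:}\rangle,\langle i{:}=_{\mathsf c}k{:}\rangle,\Gamma\vdash\Delta\Rightarrow\langle i{:}=_{\mathsf c}j{:}\rangle,\langle i{:}=_{\mathsf c}k{:}\rangle,\Gamma\vdash\Delta$; (NEqL) $\Gamma\vdash\Delta,\langle i{:}=_{\mathsf c}j{:}\rangle\Rightarrow\langle i{:}\neq_{\mathsf c}j{:}\rangle,\Gamma\vdash\Delta$; (NEqR) $\langle i{:}=_{\mathsf c}j{:}\rangle,\Gamma\vdash\Delta\Rightarrow\Gamma\vdash\Delta,\langle i{:}\neq_{\mathsf c}j{:}\rangle$; (Cut) $\Gamma\vdash\Delta,\varphi$ and $\varphi,\Gamma'\vdash\Delta'\Rightarrow\Gamma,\Gamma'\vdash\Delta,\Delta'$; (WL) $\Gamma\vdash\Delta\Rightarrow\varphi,\Gamma\vdash\Delta$; (WR) $\Gamma\vdash\Delta\Rightarrow\Gamma\vdash\Delta,\varphi$. Here $@_i\langle\alpha\rangle j$ for a path $\alpha$ is understood via the abbreviations above. A derivation is a finite tree of sequents in which each non-leaf node is the conclusion of an instance of a rule of $\mathbf G$ whose premisses are its children.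 A sequent is provable in $\mathbf G$ if it is the root of a derivation all of whose leaves are instances of (Ax) or ($\bot$). *)

From Stdlib Require Import List.
Import ListNotations.
Set Implicit Arguments.

Section HXPathD.
Variables Mod Cmp : Type.

(* Prop = nat, Nom = nat (countably infinite, disjoint by constructors). *)
Inductive form : Type :=
  | FProp (p : nat)
  | FNom (i : nat)
  | FBot
  | FImp (phi psi : form)
  | FAt (i : nat) (phi : form)
  | FDia (a : Mod) (phi : form)
  | FEq (c : Cmp) (al be : path)
  | FNeq (c : Cmp) (al be : path)
with path : Type :=
  | PMod (a : Mod)
  | PNom (i : nat)
  | PTest (phi : form)
  | PSeq (al be : path).

Definition fNeg (phi : form) : form := FImp phi FBot.
Definition fAnd (phi psi : form) : form := fNeg (FImp phi (fNeg psi)).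

Fixpoint diam (al : path) (phi : form) : form :=
  match al with
  | PMod a => FDia a phi
  | PNom j => FAt j phi
  | PTest psi => fAnd psi phi
  | PSeq a1 a2 => diam a1 (diam a2 phi)
  end.

Definition cmpf (b : bool) (c : Cmp) (al be : path) : form :=
  if b then FEq c al be else FNeq c al be.

Definition eqn (c : Cmp) (i j : nat) : form := FEq c (PNom i) (PNom j).
Definition neqn (c : Cmp) (i j : nat) : form := FNeq c (PNom i) (PNom j).

Fixpoint noms_f (phi : form) : list nat :=
  match phi with
  | FProp _ | FBot => []
  | FNom i => [i]
  | FImp a b => noms_f a ++ noms_f b
  | FAt i a => i :: noms_f a
  | FDia _ a => noms_f a
  | FEq _ a b | FNeq _ a b => noms_p a ++ noms_p b
  end
with noms_p (al : path) : list nat :=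
  match al with
  | PMod _ => []
  | PNom i => [i]
  | PTest phi => noms_f phi
  | PSeq a b => noms_p a ++ noms_p b
  end.

Definition nom_in_seq (j : nat) (G D : list form) : Prop :=
  In j (flat_map noms_f (G ++ D)).

Record model : Type := Model {
  N : Type;
  n_inh : N;
  R : Mod -> N -> N -> Prop;
  E : Cmp -> N -> N -> Prop;
  E_refl : forall c x, E c x x;
  E_sym : forall c x y, E c x y -> E c y x;
  E_trans : forall c x y z, E c x y -> E c y z -> E c x z;
  g : nat -> N;
  V : nat -> N -> Prop
}.

Fixpoint fsat (M : model) (n : N M) (phi : form) {struct phi} : Prop :=
  match phi with
  | FProp p => V M p n
  | FNom i => g M i = n
  | FBot => False
  | FImp a b => fsat M n a -> fsat M n b
  | FAt i a => fsat M (g M i) a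
  | FDia a b => exists n', R M a n n' /\ fsat M n' b
  | FEq c al be => exists n' n'', psat M al n n' /\ psat M be n n'' /\ E M c n' n''
  | FNeq c al be => exists n' n'', psat M al n n' /\ psat M be n n'' /\ ~ E M c n' n''
  end
with psat (M : model) (al : path) (n n' : N M) {struct al} : Prop :=
  match al with
  | PMod a => R M a n n'
  | PNom i => g M i = n'
  | PTest phi => n = n' /\ fsat M n phi
  | PSeq a b => exists n'', psat M a n n'' /\ psat M b n'' n'
  end.

Definition seq_elem (phi : form) : Prop :=
  match phi with
  | FAt _ _ => True
  | FEq _ (PNom _) (PNom _) => True
  | FNeq _ (PNom _) (PNom _) => True
  | _ => False
  end.

Definition wf_sequent (G D : list form) : Prop :=
  (forall phi, In phi G -> seq_elem phi) /\ (forall phi, In phi D -> seq_elem phi).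

Definition valid_sequent (G D : list form) : Prop :=
  forall (M : model) (n : N M),
    (forall gam, In gam G -> fsat M n gam) -> exists del, In del D /\ fsat M n del.

Definition ax_form (phi : form) : Prop :=
  match phi with
  | FAt _ (FProp _) => True
  | FAt _ (FNom _) => True
  | FEq _ (PNom _) (PNom _) => True
  | _ => False
  end.

Definition s1_form (phi : form) : Prop :=
  match phi with
  | FProp _ | FBot => True
  | FDia _ (FNom _) => True
  | _ => False
  end.

Definition same_set (l1 l2 : list form) : Prop := forall x, In x l1 <-> In x l2.

(* The calculus G. Sequents are finite sets, represented by lists taken up to
   set equality (constructor G_set). *)
Inductive Gprov : list form -> list form -> Prop :=
  | G_Ax phi G D : ax_form phi -> Gprov (phi :: G) (phi :: D)
  | G_Bot i G D : Gprov (FAt i FBot :: G) D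
  | G_ImpL i phi psi G D :
      Gprov G (FAt i phi :: D) -> Gprov (FAt i psi :: G) D ->
      Gprov (FAt i (FImp phi psi) :: G) D
  | G_ImpR i phi psi G D :
      Gprov (FAt i phi :: G) (FAt i psi :: D) ->
      Gprov G (FAt i (FImp phi psi) :: D)
  | G_AtT i G D : Gprov (FAt i (FNom i) :: G) D -> Gprov G D
  | G_At5 i j k G D :
      Gprov (FAt j (FNom k) :: FAt i (FNom j) :: FAt i (FNom k) :: G) D ->
      Gprov (FAt i (FNom j) :: FAt i (FNom k) :: G) D
  | G_Nom i j G D :
      Gprov (FAt i (FNom j) :: G) D -> ~ nom_in_seq j G D -> Gprov G D
  | G_S1 i j phi G D : s1_form phi ->
      Gprov (FAt j phi :: FAt i (FNom j) :: FAt i phi :: G) D ->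
      Gprov (FAt i (FNom j) :: FAt i phi :: G) D
  | G_S2 i j k a G D :
      Gprov (FAt i (FDia a (FNom k)) :: FAt j (FNom k) :: FAt i (FDia a (FNom j)) :: G) D ->
      Gprov (FAt j (FNom k) :: FAt i (FDia a (FNom j)) :: G) D
  | G_S3 i j k c G D :
      Gprov (eqn c j k :: FAt i (FNom j) :: eqn c i k :: G) D ->
      Gprov (FAt i (FNom j) :: eqn c i k :: G) D
  | G_AtL i j phi G D :
      Gprov (FAt i phi :: G) D -> Gprov (FAt j (FAt i phi) :: G) D
  | G_AtR i j phi G D :
      Gprov G (FAt i phi :: D) -> Gprov G (FAt j (FAt i phi) :: D)
  | G_DiaL i j a phi G D :
      Gprov (FAt i (FDia a (FNom j)) :: FAt j phi :: G) D ->
      ~ nom_in_seq j (FAt i (FDia a phi) :: G) D ->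
      Gprov (FAt i (FDia a phi) :: G) D
  | G_DiaR i j a phi G D :
      Gprov (FAt i (FDia a (FNom j)) :: G) (FAt i (FDia a phi) :: FAt j phi :: D) ->
      Gprov (FAt i (FDia a (FNom j)) :: G) (FAt i (FDia a phi) :: D)
  | G_CmpL b c i j k al be G D :
      Gprov (FAt i (diam al (FNom j)) :: FAt i (diam be (FNom k)) :: cmpf b c (PNom j) (PNom k) :: G) D ->
      j <> k ->
      ~ nom_in_seq j (FAt i (cmpf b c al be) :: G) D ->
      ~ nom_in_seq k (FAt i (cmpf b c al be) :: G) D ->
      Gprov (FAt i (cmpf b c al be) :: G) D
  | G_CmpR b c i j k al be G D :
      Gprov (FAt i (diam al (FNom j)) :: FAt i (diam be (FNom k)) :: G)
            (FAt i (cmpf b c al be) :: cmpf b c (PNom j) (PNom k) :: D) ->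
      Gprov (FAt i (diam al (FNom j)) :: FAt i (diam be (FNom k)) :: G)
            (FAt i (cmpf b c al be) :: D)
  | G_EqT c i G D : Gprov (eqn c i i :: G) D -> Gprov G D
  | G_Eq5 c i j k G D :
      Gprov (eqn c j k :: eqn c i j :: eqn c i k :: G) D ->
      Gprov (eqn c i j :: eqn c i k :: G) D
  | G_NEqL c i j G D : Gprov G (eqn c i j :: D) -> Gprov (neqn c i j :: G) D
  | G_NEqR c i j G D : Gprov (eqn c i j :: G) D -> Gprov G (neqn c i j :: D)
  | G_Cut phi G D G' D' : seq_elem phi ->
      Gprov G (phi :: D) -> Gprov (phi :: G') D' -> Gprov (G ++ G') (D ++ D')
  | G_WL phi G D : seq_elem phi -> Gprov G D -> Gprov (phi :: G) D
  | G_WR phi G D : seq_elem phi -> Gprov G D -> Gprov G (phi :: D)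
  | G_set G D G' D' : Gprov G D -> same_set G G' -> same_set D D' -> Gprov G' D'.

End HXPathD.

(* Henkin-style completeness.  An unprovable sequent is extended, along an enumeration of all
   formulas, to a saturated set [T] of sequent elements: [T] contains the antecedent and misses
   the succedent, contains an element of the succedent of every provable sequent whose antecedent
   it contains, and every [@_i <a> phi] or [@_i <al ▲ be>] in [T] comes with witnessing nominals,
   which the left rules allow to be chosen fresh.  Taking as worlds the nominals modulo [@_i j],
   [@_i phi] holds in the resulting model exactly when it lies in [T] (by induction on formulas
   and paths, the substitution rules moving facts between equal nominals), so that model refutes
   the sequent. *)

From mathcomp Require Import ssreflect ssrfun ssrbool eqtype choice fintype.
From Stdlib Require Import List Lia Classical ClassicalEpsilon.
From Stdlib Require Import FunctionalExtensionality PropExtensionality.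
Import ListNotations.

Scheme form_mind := Induction for form Sort Prop
  with path_mind := Induction for path Sort Prop.

Section Enumeration.
Variables Mod Cmp : countType.

Fixpoint tree_of_form (f : form Mod Cmp) : GenTree.tree nat :=
  match f with
  | FProp p => GenTree.Node 0 [GenTree.Leaf p]
  | FNom i => GenTree.Node 1 [GenTree.Leaf i]
  | FBot => GenTree.Node 2 []
  | FImp f1 f2 => GenTree.Node 3 [tree_of_form f1; tree_of_form f2]
  | FAt i f1 => GenTree.Node 4 [GenTree.Leaf i; tree_of_form f1]
  | FDia a f1 => GenTree.Node 5 [GenTree.Leaf (pickle a); tree_of_form f1]
  | FEq c al be => GenTree.Node 6 [GenTree.Leaf (pickle c); tree_of_path al; tree_of_path be]
  | FNeq c al be => GenTree.Node 7 [GenTree.Leaf (pickle c); tree_of_path al; tree_of_path be]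
  end
with tree_of_path (al : path Mod Cmp) : GenTree.tree nat :=
  match al with
  | PMod a => GenTree.Node 8 [GenTree.Leaf (pickle a)]
  | PNom i => GenTree.Node 9 [GenTree.Leaf i]
  | PTest f => GenTree.Node 10 [tree_of_form f]
  | PSeq al1 al2 => GenTree.Node 11 [tree_of_path al1; tree_of_path al2]
  end.

Lemma tree_of_form_inj : injective tree_of_form.
Proof.
  intros f.
  induction f using form_mind with
    (P0 := fun al => forall al', tree_of_path al = tree_of_path al' -> al = al');
    intros [] Heq; simpl in Heq; try discriminate; try (injection Heq; intros);
    repeat match goal with H : pickle _ = pickle _ |- _ => apply (pcan_inj pickleK) in H end;
    subst; f_equal; auto.
Qed.

Lemma form_enumerable : exists en : nat -> form Mod Cmp, forall f, exists n, en n = f.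
Proof.
  exists (fun n => epsilon (inhabits (FBot Mod Cmp)) (fun f => pickle (tree_of_form f) = n)).
  intros f. exists (pickle (tree_of_form f)).
  apply tree_of_form_inj, (pcan_inj pickleK).
  apply (epsilon_spec (inhabits (FBot Mod Cmp)) (fun f' => pickle (tree_of_form f') = _)).
  exists f; reflexivity.
Qed.

End Enumeration.

Ltac same_elems := intro; simpl; rewrite ?in_app_iff; tauto.

Lemma incl_chain {A : Type} (f : nat -> list A) {L : list A} :
  (forall n m, n <= m -> incl (f n) (f m)) ->
  Forall (fun x => exists n, In x (f n)) L -> exists n, incl L (f n).
Proof.
  intros Hmono HL. induction HL as [|x L [m Hm] _ [n Hn]].
  - exists 0. intros x [].
  - exists (Nat.max m n). intros y [<-|Hy].
    + apply (Hmono m); [lia | exact Hm].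
    + apply (Hmono n); [lia | exact (Hn y Hy)].
Qed.

Section HXPath.
Variables Mod Cmp : Type.
Notation F := (form Mod Cmp).
Notation nom := (FNom Mod Cmp).
Notation pnom := (PNom Mod Cmp).
Notation eqn := (eqn Mod).
Notation neqn := (neqn Mod).
Notation all_elems := (Forall (@seq_elem Mod Cmp)).
Notation noms := (flat_map (@noms_f Mod Cmp)).
Implicit Types (phi psi chi : F) (G D L : list F) (a : Mod) (c : Cmp) (al be : path Mod Cmp).

Lemma Gprov_weakenL {L G D} : all_elems L -> Gprov G D -> Gprov (L ++ G) D.
Proof. intros HL HGD. induction HL; simpl; auto using G_WL. Qed.

Lemma Gprov_weakenR {L G D} : all_elems L -> Gprov G D -> Gprov G (L ++ D).
Proof. intros HL HGD. induction HL; simpl; auto using G_WR. Qed.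

Lemma Gprov_weaken {G D G' D'} : Gprov G D -> incl G G' -> incl D D' ->
  all_elems G' -> all_elems D' -> Gprov G' D'.
Proof.
  intros HGD HG HD HG' HD'.
  apply (G_set (Gprov_weakenL HG' (Gprov_weakenR HD' HGD))); intro x; rewrite in_app_iff;
    firstorder.
Qed.

Lemma Gprov_cut {phi G D} : seq_elem phi -> Gprov G (phi :: D) -> Gprov (phi :: G) D -> Gprov G D.
Proof. intros Hphi H1 H2. apply (G_set (G_Cut Hphi H1 H2)); same_elems. Qed.

Definition fresh L : nat := S (list_max (noms L)).

Lemma fresh_not_nom_in_seq L G D j :
  fresh L <= j -> incl (G ++ D) L -> ~ nom_in_seq j G D.
Proof.
  intros Hj Hincl Hin. apply in_flat_map in Hin as [x [Hx Hjx]].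
  assert (Hmax : Forall (fun k => k <= list_max (noms L)) (noms L)) by (apply list_max_le; lia).
  rewrite Forall_forall in Hmax.
  assert (j <= list_max (noms L)) by (apply Hmax, in_flat_map; eauto).
  unfold fresh in Hj. lia.
Qed.

Lemma cmpf_nom_seq_elem b c j k : seq_elem (cmpf b c (pnom j) (pnom k)).
Proof. destruct b; exact I. Qed.

Ltac seq_elems := repeat (constructor || apply cmpf_nom_seq_elem).
Ltac fresh_nom L := apply (fresh_not_nom_in_seq L); [auto | same_elems].
Ltac weaken_of d := apply (Gprov_weaken d); [same_elems | same_elems | seq_elems | seq_elems].

Lemma Gprov_refl_cmpn b c j k : Gprov [cmpf b c (pnom j) (pnom k)] [cmpf b c (pnom j) (pnom k)].
Proof.
  destruct b.
  - apply (G_Ax _ [] []). exact I.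
  - apply G_NEqR. apply (G_set (G_NEqL (G_Ax (eqn c j k) [] [] I))); same_elems.
Qed.

Lemma Gprov_refl_cmp b c i al be : Gprov [FAt i (cmpf b c al be)] [FAt i (cmpf b c al be)].
Proof.
  set (j := fresh [FAt i (cmpf b c al be)]).
  apply (@G_CmpL _ _ b c i j (S j) al be []);
    [| lia | fresh_nom [FAt i (cmpf b c al be)] | fresh_nom [FAt i (cmpf b c al be)]].
  apply (@G_CmpR _ _ b c i j (S j) al be [_]). weaken_of (Gprov_refl_cmpn b c j (S j)).
Qed.

Lemma Gprov_refl_at phi i : Gprov [FAt i phi] [FAt i phi].
Proof.
  revert i.
  induction phi as [p | k | | phi1 IH1 phi2 IH2 | j phi IH | a phi IH | c al be | c al be];
    intros i.
  - apply (G_Ax _ [] []). exact I.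
  - apply (G_Ax _ [] []). exact I.
  - apply G_Bot.
  - apply G_ImpR. apply (G_set (D := [FAt i phi2]) (G := [FAt i (FImp phi1 phi2); FAt i phi1]));
      [apply G_ImpL; [weaken_of (IH1 i) | weaken_of (IH2 i)] | same_elems | same_elems].
  - apply G_AtR, G_AtL, IH.
  - set (j := fresh [FAt i (FDia a phi)]).
    apply (@G_DiaL _ _ i j a phi []); [| fresh_nom [FAt i (FDia a phi)]].
    apply (@G_DiaR _ _ i j a phi [_] []). weaken_of (IH j).
  - exact (Gprov_refl_cmp true c i al be).
  - exact (Gprov_refl_cmp false c i al be).
Qed.

Lemma Gprov_refl phi : seq_elem phi -> Gprov [phi] [phi].
Proof.
  destruct phi as [| | | | i phi | | c [] [] | c [] []]; simpl; try contradiction; intros _.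
  - apply Gprov_refl_at.
  - exact (Gprov_refl_cmpn true c _ _).
  - exact (Gprov_refl_cmpn false c _ _).
Qed.

Lemma fsat_cmpf (M : model Mod Cmp) X b c al be :
  fsat M X (cmpf b c al be) <->
  exists Y Z, psat M al X Y /\ psat M be X Z /\ (if b then E M c Y Z else ~ E M c Y Z).
Proof. destruct b; reflexivity. Qed.

(* The extra premises of the left rules <a>L and <▲>L for [psi], with nominals fresh for [L]. *)
Definition witnesses psi L : list F :=
  match psi with
  | FAt i (FDia a phi) => [FAt i (FDia a (nom (fresh L))); FAt (fresh L) phi]
  | FAt i (FEq c al be) =>
      [FAt i (diam al (nom (fresh L))); FAt i (diam be (nom (S (fresh L))));
       eqn c (fresh L) (S (fresh L))]
  | FAt i (FNeq c al be) =>
      [FAt i (diam al (nom (fresh L))); FAt i (diam be (nom (S (fresh L))));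
       neqn c (fresh L) (S (fresh L))]
  | _ => []
  end.

Lemma witnesses_seq_elems psi L : all_elems (witnesses psi L).
Proof. destruct psi as [| | | | i [] | | |]; seq_elems. Qed.

Lemma Gprov_witnesses psi G D :
  Gprov (witnesses psi (psi :: G ++ D) ++ psi :: G) D -> Gprov (psi :: G) D.
Proof.
  destruct psi as [| | | | i [| | | | | a phi | c al be | c al be] | | |]; simpl; try easy;
    intros Hwit.
  - apply (G_set (@G_DiaL _ _ i _ a phi (_ :: G) D Hwit
                   ltac:(fresh_nom (FAt i (FDia a phi) :: G ++ D)))); same_elems.
  - apply (G_set (@G_CmpL _ _ true c i _ _ al be (_ :: G) D Hwit ltac:(lia)
                   ltac:(fresh_nom (FAt i (FEq c al be) :: G ++ D))
                   ltac:(fresh_nom (FAt i (FEq c al be) :: G ++ D)))); same_elems.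
  - apply (G_set (@G_CmpL _ _ false c i _ _ al be (_ :: G) D Hwit ltac:(lia)
                   ltac:(fresh_nom (FAt i (FNeq c al be) :: G ++ D))
                   ltac:(fresh_nom (FAt i (FNeq c al be) :: G ++ D)))); same_elems.
Qed.

Record saturated (T : F -> Prop) : Prop := {
  saturated_closed : forall G D, Forall T G -> all_elems D -> Gprov G D -> Exists T D;
  saturated_dia : forall i a phi, T (FAt i (FDia a phi)) ->
    exists j, T (FAt i (FDia a (nom j))) /\ T (FAt j phi);
  saturated_cmp : forall b c i al be, T (FAt i (cmpf b c al be)) ->
    exists j k, T (FAt i (diam al (nom j))) /\ T (FAt i (diam be (nom k))) /\
                T (cmpf b c (pnom j) (pnom k))
}.
Arguments saturated_closed {T} _ {G D}.
Arguments saturated_dia {T} _ {i a phi}.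
Arguments saturated_cmp {T} _ {b c i al be}.

Section Lindenbaum.
Variable en : nat -> F.
Hypothesis en_surj : forall phi, exists n, en n = phi.
Variables G0 D0 : list F.
Hypothesis G0_elems : all_elems G0.
Hypothesis D0_elems : all_elems D0.
Hypothesis G0_D0 : ~ Gprov G0 D0.

Definition lindenbaum_step psi (s : list F * list F) : list F * list F :=
  let (G, D) := s in
  if excluded_middle_informative (seq_elem psi) then
    if excluded_middle_informative (Gprov (psi :: G) D) then (G, psi :: D)
    else (witnesses psi (psi :: G ++ D) ++ psi :: G, D)
  else (G, D).

Fixpoint stage n : list F * list F :=
  match n with
  | 0 => (G0, D0)
  | S n => lindenbaum_step (en n) (stage n)
  end.

Lemma stage_unprovable n :
  all_elems (fst (stage n)) /\ all_elems (snd (stage n)) /\ ~ Gprov (fst (stage n)) (snd (stage n)).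
Proof.
  induction n as [|n IH]; simpl; [tauto|].
  destruct (stage n) as [G D]; simpl in *. destruct IH as [HG [HD HGD]].
  destruct (excluded_middle_informative (seq_elem (en n))) as [Hse|]; [|tauto].
  destruct (excluded_middle_informative (Gprov (en n :: G) D)) as [Hprov|Hprov]; simpl.
  - repeat split; auto. intros Hcut. exact (HGD (Gprov_cut Hse Hcut Hprov)).
  - repeat split; auto using Gprov_witnesses.
    apply Forall_app. auto using witnesses_seq_elems.
Qed.

Lemma stage_mono {n m} :
  n <= m -> incl (fst (stage n)) (fst (stage m)) /\ incl (snd (stage n)) (snd (stage m)).
Proof.
  induction 1 as [|m _ [IHG IHD]]; [split; apply incl_refl|].
  simpl. destruct (stage m) as [G D]; simpl in *.
  destruct (excluded_middle_informative (seq_elem (en m))); [|tauto].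
  destruct (excluded_middle_informative (Gprov (en m :: G) D)); simpl; split;
    eauto using incl_tl, incl_appr, incl_tran.
Qed.

Definition accepted phi := exists n, In phi (fst (stage n)).
Definition rejected phi := exists n, In phi (snd (stage n)).

Lemma accepted_rejected_unprovable {G D} : Forall accepted G -> Forall rejected D -> ~ Gprov G D.
Proof.
  intros HG HD HGD.
  destruct (incl_chain (fun n => fst (stage n)) (fun n m H => proj1 (stage_mono H)) HG) as [n Hn].
  destruct (incl_chain (fun n => snd (stage n)) (fun n m H => proj2 (stage_mono H)) HD) as [m Hm].
  destruct (stage_unprovable (Nat.max n m)) as [HG' [HD' Hunprov]].
  apply Hunprov. apply (Gprov_weaken HGD); [| | exact HG' | exact HD'].
  - apply (incl_tran Hn), (@stage_mono n (Nat.max n m) ltac:(lia)).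
  - apply (incl_tran Hm), (@stage_mono m (Nat.max n m) ltac:(lia)).
Qed.

Lemma stage_decides {psi} : seq_elem psi -> exists n G D, stage n = (G, D) /\
  (Gprov (psi :: G) D /\ stage (S n) = (G, psi :: D) \/
   ~ Gprov (psi :: G) D /\ stage (S n) = (witnesses psi (psi :: G ++ D) ++ psi :: G, D)).
Proof.
  intros Hpsi. destruct (en_surj psi) as [n <-].
  exists n. destruct (stage n) as [G D] eqn:Hn. exists G, D. split; [reflexivity|].
  simpl. rewrite Hn. simpl.
  destruct (excluded_middle_informative (seq_elem (en n))); [|contradiction].
  destruct (excluded_middle_informative (Gprov (en n :: G) D)); auto.
Qed.

Lemma accepted_or_rejected {psi} : seq_elem psi -> accepted psi \/ rejected psi.
Proof.
  intros Hpsi. destruct (stage_decides Hpsi) as [n [G [D [_ [[_ Hs] | [_ Hs]]]]]].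
  - right. exists (S n). rewrite Hs. now left.
  - left. exists (S n). rewrite Hs. apply in_app_iff. right. now left.
Qed.

Lemma accepted_witnessed {psi} : accepted psi -> exists L, Forall accepted (witnesses psi L).
Proof.
  intros Hpsi.
  assert (Hse : seq_elem psi).
  { destruct Hpsi as [n Hn]. destruct (stage_unprovable n) as [Hn_elems _].
    rewrite Forall_forall in Hn_elems. exact (Hn_elems psi Hn). }
  destruct (stage_decides Hse) as [n [G [D [Hn [[Hprov _] | [_ Hs]]]]]].
  - exfalso. apply (accepted_rejected_unprovable (G := psi :: G) (D := D)); [| | exact Hprov].
    + constructor; [exact Hpsi|]. apply Forall_forall. intros x Hx. exists n. now rewrite Hn.
    + apply Forall_forall. intros x Hx. exists n. now rewrite Hn.
  - exists (psi :: G ++ D). apply Forall_forall. intros x Hx. exists (S n).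
    rewrite Hs. apply in_app_iff. now left.
Qed.

Lemma accepted_saturated : saturated accepted.
Proof.
  split.
  - intros G D HG HD HGD. apply NNPP. intros Hnone.
    apply (accepted_rejected_unprovable HG (D := D)); [|exact HGD].
    rewrite Forall_forall in HD. apply Forall_forall. intros x Hx.
    destruct (accepted_or_rejected (HD x Hx)) as [Hacc|]; [|assumption].
    exfalso. apply Hnone, Exists_exists. eauto.
  - intros i a phi H. destruct (accepted_witnessed H) as [L HL]. rewrite Forall_forall in HL.
    exists (fresh L). split; apply HL; simpl; auto.
  - intros b c i al be H. destruct (accepted_witnessed H) as [L HL]. rewrite Forall_forall in HL.
    exists (fresh L), (S (fresh L)). destruct b; repeat split; apply HL; simpl; auto.
Qed.

Lemma lindenbaum : exists T, saturated T /\ Forall T G0 /\ Forall (fun phi => ~ T phi) D0.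
Proof.
  exists accepted. split; [exact accepted_saturated|]. split.
  - apply Forall_forall. intros x Hx. now exists 0.
  - apply Forall_forall. intros x Hx Hacc.
    apply (accepted_rejected_unprovable (G := [x]) (D := [x])).
    + now constructor.
    + constructor; [now exists 0 | constructor].
    + apply Gprov_refl. exact (proj1 (Forall_forall _ _) D0_elems x Hx).
Qed.

End Lindenbaum.

Section CanonicalModel.
Variable T : F -> Prop.
Hypothesis T_saturated : saturated T.

Lemma derivable G phi : Forall T G -> seq_elem phi -> Gprov G [phi] -> T phi.
Proof.
  intros HG Hphi HGphi.
  assert (Hex : Exists T [phi]).
  { apply (saturated_closed T_saturated HG); [now repeat constructor | exact HGphi]. }
  rewrite Exists_cons Exists_nil in Hex. tauto.
Qed.

Lemma underivable G : Forall T G -> ~ Gprov G [].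
Proof.
  intros HG HGD. apply Exists_nil with (P := T).
  exact (saturated_closed T_saturated HG (Forall_nil _) HGD).
Qed.

Lemma derivable_either G phi psi :
  Forall T G -> seq_elem phi -> seq_elem psi -> Gprov G [phi; psi] -> T phi \/ T psi.
Proof.
  intros HG Hphi Hpsi HGD.
  assert (Hex : Exists T [phi; psi]).
  { apply (saturated_closed T_saturated HG); [now repeat constructor | exact HGD]. }
  rewrite !Exists_cons Exists_nil in Hex. tauto.
Qed.

Ltac derive_from G := apply (derivable G); [repeat constructor; auto | exact I |].

Lemma at_nom_refl i : T (FAt i (nom i)).
Proof. derive_from (@nil F). apply (G_AtT (i := i)). apply (G_Ax _ [] []). exact I. Qed.

Lemma at_nom_euclid {i j k} : T (FAt i (nom j)) -> T (FAt i (nom k)) -> T (FAt j (nom k)).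
Proof. intros. derive_from [FAt i (nom j); FAt i (nom k)]. apply G_At5, (G_Ax _ _ []). exact I. Qed.

Lemma at_nom_sym {i j} : T (FAt i (nom j)) -> T (FAt j (nom i)).
Proof. intros Hij. exact (at_nom_euclid Hij (at_nom_refl i)). Qed.

Lemma at_nom_trans {i j k} : T (FAt i (nom j)) -> T (FAt j (nom k)) -> T (FAt i (nom k)).
Proof. intros Hij Hjk. exact (at_nom_euclid (at_nom_sym Hij) Hjk). Qed.

Lemma at_bot i : ~ T (FAt i (FBot Mod Cmp)).
Proof.
  intros Hbot. apply (underivable [FAt i (FBot Mod Cmp)]); [now constructor | apply G_Bot].
Qed.

Lemma at_imp i phi psi : T (FAt i (FImp phi psi)) <-> (T (FAt i phi) -> T (FAt i psi)).
Proof.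
  split.
  - intros Himp Hphi. derive_from [FAt i (FImp phi psi); FAt i phi].
    apply G_ImpL; [weaken_of (Gprov_refl_at phi i) | weaken_of (Gprov_refl_at psi i)].
  - intros Himp.
    assert (Hcases : T (FAt i (FImp phi psi)) \/ T (FAt i phi)).
    { apply (derivable_either []); [constructor | exact I | exact I |].
      apply G_ImpR. weaken_of (Gprov_refl_at phi i). }
    destruct Hcases as [|Hphi]; [assumption|].
    derive_from [FAt i psi].
    apply G_ImpR. weaken_of (Gprov_refl_at psi i).
Qed.

Lemma at_and i phi psi : T (FAt i (fAnd phi psi)) <-> T (FAt i phi) /\ T (FAt i psi).
Proof.
  unfold fAnd, fNeg. rewrite !at_imp. pose proof (at_bot i).
  destruct (classic (T (FAt i phi))), (classic (T (FAt i psi))); tauto.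
Qed.

Lemma at_at i j phi : T (FAt j (FAt i phi)) <-> T (FAt i phi).
Proof.
  split; intros H.
  - derive_from [FAt j (FAt i phi)]. apply G_AtL, Gprov_refl_at.
  - derive_from [FAt i phi]. apply G_AtR, Gprov_refl_at.
Qed.

Lemma at_dia_intro {i j a phi} :
  T (FAt i (FDia a (nom j))) -> T (FAt j phi) -> T (FAt i (FDia a phi)).
Proof.
  intros. derive_from [FAt i (FDia a (nom j)); FAt j phi].
  apply (@G_DiaR _ _ i j a phi [_] []). weaken_of (Gprov_refl_at phi j).
Qed.

Lemma at_cmp_intro {b c i j k al be} :
  T (FAt i (diam al (nom j))) -> T (FAt i (diam be (nom k))) -> T (cmpf b c (pnom j) (pnom k)) ->
  T (FAt i (cmpf b c al be)).
Proof.
  intros.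
  derive_from [FAt i (diam al (nom j)); FAt i (diam be (nom k)); cmpf b c (pnom j) (pnom k)].
  apply (@G_CmpR _ _ b c i j k al be [_] []). weaken_of (Gprov_refl_cmpn b c j k).
Qed.

Lemma eqn_refl c i : T (eqn c i i).
Proof. derive_from (@nil F). apply (G_EqT (c := c) (i := i)). apply (G_Ax _ [] []). exact I. Qed.

Lemma eqn_euclid {c i j k} : T (eqn c i j) -> T (eqn c i k) -> T (eqn c j k).
Proof. intros. derive_from [eqn c i j; eqn c i k]. apply G_Eq5, (G_Ax _ _ []). exact I. Qed.

Lemma eqn_sym {c i j} : T (eqn c i j) -> T (eqn c j i).
Proof. intros Hij. exact (eqn_euclid Hij (eqn_refl c i)). Qed.

Lemma eqn_trans {c i j k} : T (eqn c i j) -> T (eqn c j k) -> T (eqn c i k).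
Proof. intros Hij Hjk. exact (eqn_euclid (eqn_sym Hij) Hjk). Qed.

Lemma neqn_not_eqn c i j : T (neqn c i j) <-> ~ T (eqn c i j).
Proof.
  split.
  - intros Hneq Heq. apply (underivable [neqn c i j; eqn c i j]); [now repeat constructor|].
    apply G_NEqL, (G_Ax _ [] []). exact I.
  - intros Hneq.
    assert (Hcases : T (neqn c i j) \/ T (eqn c i j)).
    { apply (derivable_either []); [constructor | exact I | exact I |].
      apply G_NEqR, (G_Ax _ [] []). exact I. }
    tauto.
Qed.

Lemma at_s1_subst {i j phi} : T (FAt i (nom j)) -> T (FAt i phi) -> s1_form phi -> T (FAt j phi).
Proof.
  intros Hij Hi Hphi. derive_from [FAt i (nom j); FAt i phi].
  apply (G_S1 Hphi). weaken_of (Gprov_refl_at phi j).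
Qed.

Lemma eqn_subst {c i j k} : T (FAt i (nom j)) -> T (eqn c i k) -> T (eqn c j k).
Proof. intros. derive_from [FAt i (nom j); eqn c i k]. apply G_S3, (G_Ax _ _ []). exact I. Qed.

Definition transferable phi := forall i j, T (FAt i (nom j)) -> T (FAt j phi) -> T (FAt i phi).
Definition diam_transferable al := forall psi, transferable psi -> transferable (diam al psi).

Lemma transferable_nom k : transferable (nom k).
Proof. intros i j Hij Hjk. exact (at_nom_trans Hij Hjk). Qed.

Lemma transferable_at k phi : transferable (FAt k phi).
Proof. intros i j _ Hj. apply at_at. exact (proj1 (at_at _ _ _) Hj). Qed.

Lemma transferable_dia a phi : transferable (FDia a phi).
Proof.
  intros i j Hij Hj. destruct (saturated_dia T_saturated Hj) as [k [Hjk Hk]].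
  apply (at_dia_intro (j := k)); [|exact Hk].
  exact (at_s1_subst (at_nom_sym Hij) Hjk I).
Qed.

Lemma transferable_cmp b c {al be} :
  diam_transferable al -> diam_transferable be -> transferable (cmpf b c al be).
Proof.
  intros Hal Hbe i j Hij Hj. destruct (saturated_cmp T_saturated Hj) as [k [l [Hk [Hl Hkl]]]].
  apply (at_cmp_intro (j := k) (k := l)); [| |exact Hkl].
  - exact (Hal _ (transferable_nom k) i j Hij Hk).
  - exact (Hbe _ (transferable_nom l) i j Hij Hl).
Qed.

Lemma at_transfer phi : transferable phi.
Proof.
  revert phi. apply (@form_mind Mod Cmp transferable diam_transferable).
  - intros p i j Hij Hj. exact (at_s1_subst (at_nom_sym Hij) Hj I).
  - apply transferable_nom.
  - intros i j _ Hj. destruct (at_bot j Hj).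
  - intros phi IHphi psi IHpsi i j Hij Hj. apply at_imp. intros Hi.
    apply (IHpsi i j Hij), (proj1 (at_imp _ _ _) Hj), (IHphi j i (at_nom_sym Hij) Hi).
  - intros k phi _. apply transferable_at.
  - intros a phi _. apply transferable_dia.
  - intros c al IHal be IHbe. exact (transferable_cmp true c IHal IHbe).
  - intros c al IHal be IHbe. exact (transferable_cmp false c IHal IHbe).
  - intros a psi _. apply transferable_dia.
  - intros k psi _. apply transferable_at.
  - intros chi IHchi psi IHpsi i j Hij Hj. apply at_and. apply at_and in Hj as [Hchi Hpsi].
    split; [exact (IHchi i j Hij Hchi) | exact (IHpsi i j Hij Hpsi)].
  - intros al1 IH1 al2 IH2 psi IHpsi. apply IH1, IH2, IHpsi.
Qed.

Lemma at_diam al i phi :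
  T (FAt i (diam al phi)) <-> exists k, T (FAt i (diam al (nom k))) /\ T (FAt k phi).
Proof.
  revert i phi. induction al as [a | j | chi | al1 IH1 al2 IH2]; intros i phi; simpl.
  - split.
    + apply (saturated_dia T_saturated).
    + intros [k [Hik Hk]]. exact (at_dia_intro Hik Hk).
  - rewrite at_at. split.
    + intros Hj. exists j. rewrite at_at. split; [apply at_nom_refl | exact Hj].
    + intros [k [Hjk Hk]]. rewrite at_at in Hjk. exact (at_transfer phi _ _ Hjk Hk).
  - rewrite at_and. split.
    + intros [Hchi Hphi]. exists i. rewrite at_and.
      split; [split; [exact Hchi | apply at_nom_refl] | exact Hphi].
    + intros [k [Hik Hk]]. rewrite at_and in Hik. destruct Hik as [Hchi Hik].
      split; [exact Hchi | exact (at_transfer phi _ _ Hik Hk)].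
  - rewrite IH1. split.
    + intros [k [Hik Hk]]. rewrite IH2 in Hk. destruct Hk as [l [Hkl Hl]].
      exists l. split; [apply IH1; eauto | exact Hl].
    + intros [l [Hil Hl]]. rewrite IH1 in Hil. destruct Hil as [k [Hik Hkl]].
      exists k. split; [exact Hik | apply IH2; eauto].
Qed.

(* Worlds are the classes of nominals under [i ~ j <-> T (@_i j)]; the other predicates on [nat]
   are junk worlds, which is why [canon_E] contains the diagonal. *)
Definition nom_class i : nat -> Prop := fun k => T (FAt i (nom k)).

Lemma nom_class_eq i j : nom_class i = nom_class j <-> T (FAt i (nom j)).
Proof.
  split.
  - intros Hij. change (nom_class i j). rewrite Hij. apply at_nom_refl.
  - intros Hij. apply functional_extensionality. intros k. apply propositional_extensionality.
    split; [exact (at_nom_trans (at_nom_sym Hij)) | exact (at_nom_trans Hij)].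
Qed.

Lemma eqn_nom_class_congr {c i j i' j'} :
  T (eqn c i j) -> nom_class i = nom_class i' -> nom_class j = nom_class j' -> T (eqn c i' j').
Proof.
  rewrite !nom_class_eq. intros Hij Hii' Hjj'.
  exact (eqn_sym (eqn_subst Hjj' (eqn_sym (eqn_subst Hii' Hij)))).
Qed.

Definition canon_R a (X Y : nat -> Prop) : Prop :=
  exists i j, X = nom_class i /\ Y = nom_class j /\ T (FAt i (FDia a (nom j))).
Definition canon_E c (X Y : nat -> Prop) : Prop :=
  X = Y \/ exists i j, X = nom_class i /\ Y = nom_class j /\ T (eqn c i j).
Definition canon_V p (X : nat -> Prop) : Prop :=
  exists i, X = nom_class i /\ T (FAt i (FProp Mod Cmp p)).

Lemma canon_E_refl c X : canon_E c X X.
Proof. now left. Qed.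

Lemma canon_E_sym c X Y : canon_E c X Y -> canon_E c Y X.
Proof.
  intros [<-|[i [j [-> [-> Hij]]]]]; [now left|].
  right. exists j, i. auto using eqn_sym.
Qed.

Lemma canon_E_trans c X Y Z : canon_E c X Y -> canon_E c Y Z -> canon_E c X Z.
Proof.
  intros [<-|[i [j [-> [-> Hij]]]]]; [tauto|].
  intros [<-|[j' [k [Hjj' [-> Hj'k]]]]].
  - right. eauto.
  - right. exists i, k. repeat split.
    exact (eqn_trans (eqn_nom_class_congr Hij erefl Hjj') Hj'k).
Qed.

Definition canonical_model : model Mod Cmp :=
  @Model Mod Cmp (nat -> Prop) (nom_class 0) canon_R canon_E canon_E_refl canon_E_sym canon_E_trans
    nom_class canon_V.

Lemma canon_E_nom_class c j k : canon_E c (nom_class j) (nom_class k) <-> T (eqn c j k).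
Proof.
  split.
  - intros [Hjk|[j' [k' [Hj [Hk Hj'k']]]]].
    + exact (eqn_nom_class_congr (eqn_refl c j) erefl Hjk).
    + exact (eqn_nom_class_congr Hj'k' (esym Hj) (esym Hk)).
  - intros Hjk. right. eauto.
Qed.

Lemma canon_cmp_nom_class b c j k :
  (if b then canon_E c (nom_class j) (nom_class k) else ~ canon_E c (nom_class j) (nom_class k))
  <-> T (cmpf b c (pnom j) (pnom k)).
Proof.
  destruct b; simpl; rewrite canon_E_nom_class; [reflexivity|].
  symmetry. apply neqn_not_eqn.
Qed.

Definition path_truth al := forall i Y,
  psat canonical_model al (nom_class i) Y <->
  exists j, Y = nom_class j /\ T (FAt i (diam al (nom j))).

Lemma truth_dia a {phi} i : (forall j, fsat canonical_model (nom_class j) phi <-> T (FAt j phi)) ->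
  fsat canonical_model (nom_class i) (FDia a phi) <-> T (FAt i (FDia a phi)).
Proof.
  intros IH. split.
  - intros [Y [[i' [j [Hii' [-> Hi'j]]]] Hj]]. apply nom_class_eq in Hii'.
    apply IH in Hj. exact (at_transfer _ _ _ Hii' (at_dia_intro Hi'j Hj)).
  - intros Hi. destruct (saturated_dia T_saturated Hi) as [j [Hij Hj]].
    exists (nom_class j). split; [exists i, j; auto | apply IH, Hj].
Qed.

Lemma truth_cmp b c {al be} i : path_truth al -> path_truth be ->
  fsat canonical_model (nom_class i) (cmpf b c al be) <-> T (FAt i (cmpf b c al be)).
Proof.
  intros IHal IHbe. rewrite fsat_cmpf. split.
  - intros [Y [Z [Hal [Hbe HE]]]].
    apply IHal in Hal as [j [-> Hj]]. apply IHbe in Hbe as [k [-> Hk]].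
    apply canon_cmp_nom_class in HE. exact (at_cmp_intro Hj Hk HE).
  - intros Hi. destruct (saturated_cmp T_saturated Hi) as [j [k [Hj [Hk Hjk]]]].
    exists (nom_class j), (nom_class k).
    rewrite IHal IHbe. split; [eauto | split; [eauto | apply canon_cmp_nom_class, Hjk]].
Qed.

Lemma truth_lemma phi i : fsat canonical_model (nom_class i) phi <-> T (FAt i phi).
Proof.
  revert phi i.
  apply (@form_mind Mod Cmp
    (fun phi => forall i, fsat canonical_model (nom_class i) phi <-> T (FAt i phi)) path_truth);
    simpl.
  - intros p i. split.
    + intros [i' [Hii' Hp]]. apply nom_class_eq in Hii'. exact (at_transfer _ _ _ Hii' Hp).
    + intros Hp. exists i. auto.
  - intros j i. rewrite nom_class_eq. split; apply at_nom_sym.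
  - intros i. split; [tauto | apply at_bot].
  - intros phi IHphi psi IHpsi i. rewrite at_imp IHphi IHpsi. tauto.
  - intros j phi IH i. rewrite at_at. apply IH.
  - intros a phi IH i. exact (truth_dia a i IH).
  - intros c al IHal be IHbe i. exact (truth_cmp true c i IHal IHbe).
  - intros c al IHal be IHbe i. exact (truth_cmp false c i IHal IHbe).
  - intros a i Y. split.
    + intros [i' [j [Hii' [-> Hi'j]]]]. apply nom_class_eq in Hii'. exists j.
      split; [reflexivity | exact (at_transfer _ _ _ Hii' Hi'j)].
    + intros [j [-> Hij]]. exists i, j. auto.
  - intros j i Y. split.
    + intros <-. exists j. split; [reflexivity | apply at_at, at_nom_refl].
    + intros [k [-> Hjk]]. apply nom_class_eq. apply at_at in Hjk. exact Hjk.
  - intros chi IH i Y. split.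
    + intros [<- Hchi]. exists i. split; [reflexivity|].
      apply at_and. split; [apply IH, Hchi | apply at_nom_refl].
    + intros [j [-> Hij]]. apply at_and in Hij as [Hchi Hij].
      split; [apply nom_class_eq, Hij | apply IH, Hchi].
  - intros al1 IH1 al2 IH2 i Y. simpl. split.
    + intros [Z [H1 H2]]. apply IH1 in H1 as [k [-> Hk]]. apply IH2 in H2 as [j [-> Hj]].
      exists j. split; [reflexivity|]. apply at_diam. eauto.
    + intros [j [-> Hij]]. apply at_diam in Hij as [k [Hik Hkj]].
      exists (nom_class k). rewrite IH1 IH2. split; eauto.
Qed.

Lemma truth_lemma_seq_elem phi X : seq_elem phi -> fsat canonical_model X phi <-> T phi.
Proof.
  destruct phi as [| | | | i phi | | c [] [] | c [] []]; simpl; try contradiction; intros _.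
  - apply truth_lemma.
  - rewrite -canon_E_nom_class. split; [intros [Y [Z [<- [<- HE]]]]; exact HE | eauto].
  - rewrite neqn_not_eqn -canon_E_nom_class.
    split; [intros [Y [Z [<- [<- HE]]]]; exact HE | eauto].
Qed.

End CanonicalModel.

Lemma completeness (en : nat -> F) (en_surj : forall phi, exists n, en n = phi) G D :
  wf_sequent G D -> valid_sequent G D -> Gprov G D.
Proof.
  intros [HG HD] Hvalid. apply NNPP. intros Hunprov.
  destruct (lindenbaum _ en_surj _ _ (proj2 (Forall_forall _ _) HG) (proj2 (Forall_forall _ _) HD)
              Hunprov) as [T [Hsat [HTG HTD]]].
  rewrite Forall_forall in HTG. rewrite Forall_forall in HTD.
  set (w := nom_class T 0).
  destruct (Hvalid (canonical_model _ Hsat) w) as [d [Hd Hd_true]].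
  - intros x Hx. apply (truth_lemma_seq_elem _ Hsat x w (HG x Hx)), HTG, Hx.
  - apply (HTD d Hd), (truth_lemma_seq_elem _ Hsat d w (HD d Hd)), Hd_true.
Qed.

End HXPath.

Theorem theorem3 (Mod Cmp : finType) (G D : list (form Mod Cmp)) :
  wf_sequent G D -> valid_sequent G D -> Gprov G D.
Proof.
  destruct (form_enumerable Mod Cmp) as [en en_surj].
  exact (completeness _ _ _ en_surj G D).
Qed.
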